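(* Let $N\ge2$, $M\ge1$, $q_1,\dots,q_N>0$, and let each $J_k:\mathbb{R}^M\to\mathbb{R}$ be convex and differentiable with $\sum_{k=1}^Nq_kJ_k$ strongly convex, with unique minimizer $w^\star$. Let $A$ be primitive, left-stochastic and balanced with Perron vector $p$, and let $\mu_1,\dots,\mu_N>0$ satisfy $q=\beta\,\mathrm{diag}\{\mu_1,\dots,\mu_N\}p$ for some $\beta>0$. If block vectors $\mathcal{W}^\star=\mathrm{col}\{w_1^\star,\dots,w_N^\star\}\in\mathbb{R}^{NM}$ and $\mathcal{Y}^\star\in\mathbb{R}^{NM}$ exist that satisfy $$\bar{\mathcal{A}}^{\mathsf T}\mathcal{M}\nabla\mathcal{J}^o(\mathcal{W}^\star)+\mathcal{P}^{-1}\mathcal{V}\mathcal{Y}^\star=0,\qquad \mathcal{V}\mathcal{W}^\star=0,$$ then $w_1^\star=w_2^\star=\cdots=w_N^\star=w^\star$.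
   Context: $A=[a_{\ell k}]\in\mathbb{R}^{N\times N}$ is nonnegative, left-stochastic ($A^{\mathsf T}\mathbf{1}_N=\mathbf{1}_N$) and primitive, with Perron vector $p$: $Ap=p$, $\mathbf{1}_N^{\mathsf T}p=1$, $p\succ0$; $P=\mathrm{diag}(p)$, and balanced means $PA^{\mathsf T}=AP$. $q=(q_1,\dots,q_N)^{\mathsf T}$. $\bar A=(I_N+A)/2$. The symmetric positive semidefinite matrix $(P-AP)/2$ has eigendecomposition $U\Sigma U^{\mathsf T}$ and $V=U\Sigma^{1/2}U^{\mathsf T}$. $\bar{\mathcal{A}}=\bar A\otimes I_M$, $\mathcal{P}=P\otimes I_M$, $\mathcal{V}=V\otimes I_M$, $\mathcal{M}=\mathrm{diag}\{\mu_1I_M,\dots,\mu_NI_M\}$, and $\nabla\mathcal{J}^o(\mathcal{W})=\mathrm{col}\{\nabla J_1(w_1),\dots,\nabla J_N(w_N)\}$. *)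

From HB Require Import structures.
From mathcomp Require Import all_boot all_order all_algebra.
From mathcomp Require Import all_classical all_reals all_analysis.
Set Implicit Arguments. Unset Strict Implicit. Unset Printing Implicit Defensive.
Import Order.TTheory GRing.Theory Num.Theory.
Import numFieldNormedType.Exports.
Local Open Scope ring_scope.

Definition sqnorm (R : realType) (M : nat) (x : 'rV[R]_M) : R :=
  \sum_(i < M) x ord0 i ^+ 2.

Definition convex_fun (R : realType) (M : nat) (f : 'rV[R]_M -> R) : Prop :=
  forall (x y : 'rV[R]_M) (t : R), 0 <= t <= 1 ->
    f (t *: x + (1 - t) *: y) <= t * f x + (1 - t) * f y.

Definition strongly_convex_fun (R : realType) (M : nat) (f : 'rV[R]_M -> R) : Prop :=
  exists c : R, 0 < c /\
  forall (x y : 'rV[R]_M) (t : R), 0 <= t <= 1 ->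
    f (t *: x + (1 - t) *: y)
      <= t * f x + (1 - t) * f y - c / 2 * t * (1 - t) * sqnorm (x - y).

Definition grad (R : realType) (M : nat) (f : 'rV[R]_M -> R) (w : 'rV[R]_M) : 'rV[R]_M :=
  \row_i ('d f w : 'rV[R]_M -> R) (delta_mx 0 i).

Definition nonneg_mx (R : realType) (m n : nat) (A : 'M[R]_(m, n)) : Prop :=
  forall i j, 0 <= A i j.

Definition left_stochastic (R : realType) (N : nat) (A : 'M[R]_N) : Prop :=
  A^T *m const_mx 1 = (const_mx 1 : 'cV[R]_N).

Definition primitive_mx (R : realType) (N : nat) (A : 'M[R]_N) : Prop :=
  exists k : nat, forall i j, 0 < (A ^+ k) i j.

Definition perron_vector (R : realType) (N : nat) (A : 'M[R]_N) (p : 'cV[R]_N) : Prop :=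
  A *m p = p /\ \sum_i p i ord0 = 1 /\ forall i, 0 < p i ord0.

Definition diagc (R : realType) (N : nat) (p : 'cV[R]_N) : 'M[R]_N := diag_mx p^T.

Definition balanced (R : realType) (N : nat) (A : 'M[R]_N) (p : 'cV[R]_N) : Prop :=
  diagc p *m A^T = A *m diagc p.

From HB Require Import structures.
From mathcomp Require Import all_boot all_order all_algebra.
From mathcomp Require Import all_classical all_reals all_analysis.
From mathcomp Require Import lra ring.
Import Order.TTheory GRing.Theory Num.Theory.
Import numFieldNormedType.Exports.
Set Implicit Arguments.
Unset Strict Implicit.
Unset Printing Implicit Defensive.
Local Open Scope ring_scope.

(* Since [V] is the symmetric square root of [(P - A P) / 2], [V W = 0] forces
   [(P - A P) W = 0]: every column [x] of [W] satisfies [P x = A (P x)], and a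
   maximum principle for the primitive matrix [A] makes [x] constant, so all the
   [w_k] agree with some [w].  Also [V 1 = 0], hence [1^T V = 0]; multiplying the
   first condition on the left by [p^T] then leaves [sum_k q_k grad J_k(w) = 0],
   so by convexity [w] minimizes [sum_k q_k J_k] and equals [w*]. *)

Section ConvexGradient.
Variables (R : realType) (M : nat).
Implicit Types (f : 'rV[R]_M -> R) (w y : 'rV[R]_M).

Lemma diff_gradE f w (v : 'rV[R]_M) :
  ('d f w : 'rV[R]_M -> R) v = \sum_i v 0 i * grad f w 0 i.
Proof.
rewrite [in LHS](row_sum_delta v) linear_sum; apply: eq_bigr => i _.
by rewrite linearZ /grad mxE.
Qed.

Lemma convex_diff_quotient_le f w y (h : R) :
  convex_fun f -> 0 < h <= 1 -> h^-1 * (f (h *: (y - w) + w) - f w) <= f y - f w.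
Proof.
move=> cf /andP[h0 h1].
have := cf y w h; rewrite (ltW h0) h1 => /(_ isT).
have -> : h *: y + (1 - h) *: w = h *: (y - w) + w.
  by rewrite scalerBr scalerBl scale1r addrA addrAC.
by rewrite ler_pdivrMl //; lra.
Qed.

Lemma convex_diff_le f w y :
  convex_fun f -> differentiable f w -> ('d f w : 'rV[R]_M -> R) (y - w) <= f y - f w.
Proof.
move=> cf df; have dv := @diff_derivable _ _ _ f w (y - w) df.
rewrite -deriveE // /derive cvg_at_rightE //.
apply: limr_le.
  apply/cvg_ex; exists (derive f w (y - w)).
  move=> B /dv /nbhs_ballP [_ /posnumP[e] xe_B].
  by exists e%:num => //= z xe_z; rewrite lt_def => /andP [z_neq0 _]; apply: xe_B.
exists 1 => //= h; rewrite /ball /= sub0r normrN => h_lt1 h_gt0.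
apply: convex_diff_quotient_le => //; rewrite h_gt0 /=.
by apply: ltW; apply: le_lt_trans h_lt1; exact: ler_norm.
Qed.

Lemma convex_grad_sum_eq0_min (I : finType) (q : I -> R) (f : I -> 'rV[R]_M -> R) w :
  (forall k, 0 <= q k) -> (forall k, convex_fun (f k)) ->
  (forall k, differentiable (f k) w) ->
  \sum_k q k *: grad (f k) w = 0 ->
  forall y, \sum_k q k * f k w <= \sum_k q k * f k y.
Proof.
move=> q_ge0 cf df grad0 y.
have crit : \sum_k q k * ('d (f k) w : 'rV[R]_M -> R) (y - w) = 0.
  under eq_bigr => k _ do rewrite diff_gradE mulr_sumr.
  rewrite exchange_big /=; apply: big1 => i _.
  have sum0 : \sum_k (q k *: grad (f k) w) 0 i = 0 by rewrite -summxE grad0 mxE.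
  transitivity ((y - w) 0 i * \sum_k (q k *: grad (f k) w) 0 i).
    by rewrite mulr_sumr; apply: eq_bigr => k _; rewrite !mxE; ring.
  by rewrite sum0 mulr0.
rewrite -subr_ge0 -sumrB -[X in X <= _]crit.
apply: ler_sum => k _; rewrite -mulrBr; apply: ler_wpM2l => //.
exact: convex_diff_le.
Qed.

End ConvexGradient.

Lemma trmx_mul_self_eq0 (R : realDomainType) (m n : nat) (C : 'M[R]_(m, n)) :
  C^T *m C = 0 -> C = 0.
Proof.
move=> CtC0; apply/matrixP => i j; rewrite [RHS]mxE.
have := congr1 (fun X : 'M[R]_n => X j j) CtC0; rewrite !mxE => sum_sq0.
have sq_ge0 k : true -> 0 <= C^T j k * C k j by rewrite mxE -expr2 sqr_ge0.
by have /eqP := @psumr_eq0P _ _ _ _ sq_ge0 sum_sq0 i isT; rewrite mxE mulf_eq0 orbb => /eqP.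
Qed.

Lemma mulmx_trmx_self_eq0 (R : realDomainType) (m n k : nat)
    (B : 'M[R]_(m, n)) (X : 'M[R]_(n, k)) :
  B^T *m B *m X = 0 -> B *m X = 0.
Proof.
by move=> BtBX0; apply: trmx_mul_self_eq0; rewrite trmx_mul -mulmxA [B^T *m _]mulmxA BtBX0 mulmx0.
Qed.

Section SqrtFactor.
Variables (R : rcfType) (N : nat) (U V : 'M[R]_N) (s : 'rV[R]_N).
Hypothesis defV : V = U *m diag_mx (map_mx Num.sqrt s) *m U^T.

Lemma sqrt_factor_tr : V^T = V.
Proof. by rewrite defV !trmx_mul trmxK tr_diag_mx mulmxA. Qed.

Lemma sqrt_factor_sq : U^T *m U = 1%:M -> (forall i, 0 <= s 0 i) ->
  V *m V = U *m diag_mx s *m U^T.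
Proof.
move=> UtU s_ge0; rewrite defV.
rewrite -!mulmxA (mulmxA U^T U) UtU mul1mx [X in U *m X]mulmxA mulmx_diag.
congr (_ *m (diag_mx _ *m _)); apply/rowP => i.
by rewrite !mxE -expr2 sqr_sqrtr.
Qed.

End SqrtFactor.

Section HarmonicMaximum.
Variables (R : realDomainType) (N : nat) (A : 'M[R]_N) (p x : 'I_N -> R).
Hypotheses (A_ge0 : forall i j, 0 <= A i j) (Ap : forall l, \sum_k A l k * p k = p l)
  (p_gt0 : forall k, 0 < p k) (harmonic : forall l, p l * x l = \sum_k A l k * (p k * x k)).

(* At a maximum [m] of [x], [p a * (x m - x a) = \sum_k A a k * p k * (x m - x k)]
   is a sum of nonnegative terms, so each term vanishes. *)
Lemma harmonic_max_step m a b :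
  (forall i, x i <= x m) -> x a = x m -> 0 < A a b -> x b = x m.
Proof.
move=> x_le_m xa Aab_gt0.
have terms_ge0 k : true -> 0 <= A a k * p k * (x m - x k).
  by move=> _; rewrite !mulr_ge0 // ?subr_ge0 // ltW.
have sum0 : \sum_k A a k * p k * (x m - x k) = 0.
  transitivity (x m * \sum_k A a k * p k - \sum_k A a k * (p k * x k)).
    by rewrite mulr_sumr -sumrB; apply: eq_bigr => k _; ring.
  by rewrite -harmonic Ap xa mulrC subrr.
have /eqP := psumr_eq0P terms_ge0 sum0 (i := b) isT.
by rewrite !mulf_eq0 (gt_eqF Aab_gt0) (gt_eqF (p_gt0 b)) subr_eq0 => /eqP.
Qed.

Lemma harmonic_max_pow_step m n a b :
  (forall i, x i <= x m) -> x a = x m -> 0 < (A ^+ n) a b -> x b = x m.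
Proof.
move=> x_le_m; elim: n a => [|n IHn] a xa.
  by rewrite expr0 mxE; case: eqP => [<- //|]; rewrite ltxx.
rewrite exprS mxE => sum_gt0.
have [j prod_gt0] : exists j, 0 < A a j * (A ^+ n) j b.
  apply/existsP; apply: contraTT sum_gt0 => /existsPn no_path.
  by rewrite -leNgt; apply: sumr_le0 => j _; rewrite leNgt no_path.
have Aaj_gt0 : 0 < A a j.
  by rewrite lt_def A_ge0 andbT; apply: contraTneq prod_gt0 => ->; rewrite mul0r ltxx.
have An_gt0 : 0 < (A ^+ n) j b by move: prod_gt0; rewrite pmulr_rgt0.
exact: IHn j (harmonic_max_step x_le_m xa Aaj_gt0) An_gt0.
Qed.

Lemma primitive_harmonic_const n :
  (forall i j, 0 < (A ^+ n) i j) -> forall i j, x i = x j.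
Proof.
move=> An_gt0 i j.
have [m _ x_le_m] := @arg_maxP _ _ _ i xpredT x isT.
have x_le_m' : forall k, x k <= x m by move=> k; apply: x_le_m.
by rewrite (harmonic_max_pow_step x_le_m' erefl (An_gt0 m i))
           (harmonic_max_pow_step x_le_m' erefl (An_gt0 m j)).
Qed.

End HarmonicMaximum.

Section PerronDiag.
Variables (R : realType) (N : nat) (A : 'M[R]_N) (p : 'cV[R]_N).
Hypotheses (Ap : A *m p = p) (p_gt0 : forall i, 0 < p i 0).

Let L := diagc p - A *m diagc p.

Lemma diagc_mulmxE (m : nat) (X : 'M[R]_(N, m)) l j : (diagc p *m X) l j = p l 0 * X l j.
Proof. by rewrite mul_diag_mx !mxE. Qed.

Lemma diagc_mul_const : diagc p *m const_mx 1 = p.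
Proof. by apply/matrixP => i j; rewrite diagc_mulmxE mxE mulr1 (ord1 j). Qed.

Lemma laplacian_mul_const : L *m (const_mx 1 : 'cV_N) = 0.
Proof. by rewrite mulmxBl -mulmxA diagc_mul_const Ap subrr. Qed.

Lemma diagc_unitmx : diagc p \in unitmx.
Proof.
rewrite unitmxE det_diag unitfE; apply/prodf_neq0 => i _.
by rewrite mxE gt_eqF.
Qed.

Lemma trmx_mul_invmx_diagc : p^T *m invmx (diagc p) = const_mx 1.
Proof.
have <- : const_mx 1 *m diagc p = p^T.
  by apply/matrixP => i j; rewrite /diagc mul_mx_diag !mxE mul1r (ord1 i).
by rewrite mulmxK ?diagc_unitmx.
Qed.

Lemma trmx_mul_avg : p^T *m ((2%:R)^-1 *: (1%:M + A))^T = p^T.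
Proof.
rewrite -trmx_mul -scalemxAl mulmxDl mul1mx Ap; congr trmx.
by apply/matrixP => i j; rewrite !mxE; lra.
Qed.

Lemma laplacian_kernel_rows_eq (m : nat) (X : 'M[R]_(N, m)) :
  nonneg_mx A -> primitive_mx A -> L *m X = 0 -> forall i j, row i X = row j X.
Proof.
move=> A_ge0 [n An_gt0] LX0 i j; apply/rowP => c; rewrite !mxE.
apply: (primitive_harmonic_const (p := fun k => p k 0) (x := fun k => X k c) A_ge0 _ _ _ An_gt0) => //.
- by move=> l; rewrite -[RHS](congr1 (fun v : 'cV_N => v l 0) Ap) mxE.
- move=> l; rewrite -diagc_mulmxE.
  move/eqP: LX0; rewrite mulmxBl -mulmxA subr_eq0 => /eqP ->.
  by rewrite mxE; apply: eq_bigr => k _; rewrite diagc_mulmxE.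
Qed.

(* Multiply by [p^T] on the left: [p^T] is fixed by the averaging matrix and
   [p^T P^-1 = 1^T] is annihilated by [V]. *)
Lemma perron_weighted_rows_sum_eq0 (m : nat) (mu : 'cV[R]_N) (V : 'M[R]_N)
    (G Y : 'M[R]_(N, m)) :
  (const_mx 1 : 'rV_N) *m V = 0 ->
  ((2%:R)^-1 *: (1%:M + A))^T *m diag_mx mu^T *m G + invmx (diagc p) *m V *m Y = 0 ->
  \sum_k (p k 0 * mu k 0) *: row k G = 0.
Proof.
move=> oneV0 /(congr1 (mulmx p^T)); rewrite mulmxDr mulmx0 !mulmxA.
rewrite trmx_mul_avg trmx_mul_invmx_diagc oneV0 mul0mx addr0 mulmx_sum_row => sum0.
by rewrite -[X in _ = X]sum0; apply: eq_bigr => k _; rewrite mul_mx_diag !mxE.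
Qed.

End PerronDiag.

Unset Implicit Arguments.

(* Block vectors col{x_1,...,x_N} in R^{NM} are represented as N x M matrices
   whose k-th row is x_k; then (X ⊗ I_M) col{x_k} corresponds to X *m (matrix). *)
Theorem lemma2 (R : realType) (N M : nat) (hN : (2 <= N)%N) (hM : (1 <= M)%N)
  (q : 'I_N -> R) (hq : forall k, 0 < q k)
  (J : 'I_N -> 'rV[R]_M -> R)
  (hJconv : forall k, convex_fun (J k))
  (hJdiff : forall k (w : 'rV[R]_M), differentiable (J k) w)
  (hsc : strongly_convex_fun (fun w => \sum_k q k * J k w))
  (wstar : 'rV[R]_M)
  (hmin : forall w, \sum_k q k * J k wstar <= \sum_k q k * J k w)
  (huniq : forall w, (forall w', \sum_k q k * J k w <= \sum_k q k * J k w') -> w = wstar)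
  (A : 'M[R]_N) (p : 'cV[R]_N)
  (hAnn : nonneg_mx A) (hAls : left_stochastic A) (hAprim : primitive_mx A)
  (hp : perron_vector A p) (hbal : balanced A p)
  (mu : 'cV[R]_N) (hmu : forall k, 0 < mu k ord0)
  (beta : R) (hbeta : 0 < beta)
  (hqmu : forall k, q k = beta * mu k ord0 * p k ord0)
  (U : 'M[R]_N) (s : 'rV[R]_N)
  (hU : U^T *m U = 1%:M) (hs : forall i, 0 <= s ord0 i)
  (heig : (2%:R)^-1 *: (diagc p - A *m diagc p) = U *m diag_mx s *m U^T)
  (V : 'M[R]_N) (hV : V = U *m diag_mx (map_mx Num.sqrt s) *m U^T)
  (Wstar Ystar : 'M[R]_(N, M))
  (h1 : ((2%:R)^-1 *: (1%:M + A))^T *m diag_mx mu^T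
          *m (\matrix_(k < N) grad (J k) (row k Wstar))
        + invmx (diagc p) *m V *m Ystar = 0)
  (h2 : V *m Wstar = 0) :
  forall k : 'I_N, row k Wstar = wstar.
Proof.
(* Strong convexity enters only through its consequence [huniq], balancedness
   only through the symmetric factorization [heig]. *)
move=> k0; set P := diagc p; set w0 := row k0 Wstar.
have [Ap [_ p_gt0]] := hp.
have VtV : V^T *m V = (2%:R)^-1 *: (P - A *m P).
  by rewrite (sqrt_factor_tr hV) (sqrt_factor_sq hV hU hs) heig.
have V1 : V *m (const_mx 1 : 'cV_N) = 0.
  by apply: mulmx_trmx_self_eq0; rewrite VtV -scalemxAl laplacian_mul_const // scaler0.
have oneV : (const_mx 1 : 'rV_N) *m V = 0.
  by apply: trmx_inj; rewrite trmx_mul (sqrt_factor_tr hV) trmx_const V1 trmx0.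
have LW : (P - A *m P) *m Wstar = 0.
  have : V^T *m V *m Wstar = 0 by rewrite -mulmxA h2 mulmx0.
  by rewrite VtV -scalemxAl => /eqP; rewrite scaler_eq0 invr_eq0 pnatr_eq0 => /eqP.
have rows_eq := laplacian_kernel_rows_eq Ap p_gt0 hAnn hAprim LW.
have grad0 : \sum_k q k *: grad (J k) w0 = 0.
  have sum0 := perron_weighted_rows_sum_eq0 Ap p_gt0 oneV h1.
  transitivity (beta *: \sum_k (p k 0 * mu k 0) *: row k
                  (\matrix_(k < N) grad (J k) (row k Wstar))); last first.
    by rewrite sum0 scaler0.
  rewrite scaler_sumr; apply: eq_bigr => k _.
  by rewrite rowK (rows_eq k k0) scalerA hqmu; congr (_ *: _); ring.
apply: huniq; apply: convex_grad_sum_eq0_min grad0 => // k; exact: ltW.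
Qed.
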